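(* Let $n\ge 2$ be an integer and let $\mathbf{q}$ be an indeterminate. Let $H$ be the $\mathbb{Z}[\mathbf{q}]$-algebra with generators $T_1,T_2,\dots,T_{n-1}$ and relations $(T_i+1)(T_i-\mathbf{q})=0$ for $i\in[1,n-1]$, $T_iT_{i+1}T_i=T_{i+1}T_iT_{i+1}$ for $i\in[1,n-2]$, and $T_iT_j=T_jT_i$ for $i\ne j$ in $[1,n-1]$ (the Hecke algebra of type $A_{n-1}$). Set $$\tau=T_1T_2\cdots T_{n-1}+T_2T_3\cdots T_{n-1}+\dots+T_{n-2}T_{n-1}+T_{n-1}+1\in H.$$ Then the following equality holds in $H$: $$\tau\prod_{k\in[1,n],\,k\ne n-1}\bigl(\tau-1-\mathbf{q}-\mathbf{q}^2-\dots-\mathbf{q}^{k-1}\bigr)=0.$$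
   Context: For integers $a,b$, $[a,b]$ denotes the set of integers $c$ with $a\le c\le b$. The factors in the product commute since they are polynomials in $\tau$. *)

From HB Require Import structures.
From mathcomp Require Import all_boot all_order all_algebra.
Set Implicit Arguments. Unset Strict Implicit. Unset Printing Implicit Defensive.
Import GRing.Theory.
Local Open Scope ring_scope.

(* Hecke algebra relations of type A_{n-1} for elements T 1, ..., T (n-1) of a
   {poly int}-algebra A (i.e. a Z[q]-algebra, q := 'X%:A).  The Hecke algebra H
   is the universal such algebra, so an identity holds in H iff it holds for
   every family satisfying these relations in every Z[q]-algebra. *)
Definition hecke_rel (A : algType {poly int}) (n : nat) (T : nat -> A) : Prop :=
  let q : A := 'X%:A in
  [/\ (forall i, (1 <= i <= n.-1)%N -> (T i + 1) * (T i - q) = 0),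
      (forall i, (1 <= i <= n - 2)%N -> T i * T i.+1 * T i = T i.+1 * T i * T i.+1)
    & (forall i j, (1 <= i <= n.-1)%N -> (1 <= j <= n.-1)%N -> (i + 1 < j)%N ->
         T i * T j = T j * T i)].

Definition hecke_tau (A : algType {poly int}) (n : nat) (T : nat -> A) : A :=
  \sum_(1 <= i < n) (\prod_(i <= j < n) T j) + 1.

From HB Require Import structures.
From mathcomp Require Import all_boot all_order all_algebra.
From mathcomp Require Import zify.
Set Implicit Arguments. Unset Strict Implicit. Unset Printing Implicit Defensive.
Import GRing.Theory.
Local Open Scope ring_scope.

(* Write tau_n := hecke_tau n T, so that tau_1 = 1 and tau_(k+1) = 1 + tau_k T_k,
   [m] := 1 + q + ... + q^(m-1), and Y_(n,m) := tau_n tau_(n-1) ... tau_(n-m+1).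
   The quadratic and braid relations give tau_k tau_(k-1) T_(k-1) = q tau_k tau_(k-1),
   and with it an induction on m yields Y_(n,m) (tau_n - [m]) = q^m Y_(n,m+1).
   Since [0] = 0, the factor tau_n is the k = 0 factor, and the product over k < m
   of (tau_n - [k]) equals q^(m choose 2) Y_(n,m).  Finally Y_(n,n) = Y_(n,n-1) tau_1
   = Y_(n,n-1), so tau_n - [n] = tau_n - [n-1] - q^(n-1) annihilates Y_(n,n-1). *)

Definition qnat (m : nat) : {poly int} := \sum_(j < m) 'X^j.

Lemma qnat0 : qnat 0 = 0.
Proof. exact: big_ord0. Qed.

Lemma qnatS m : qnat m.+1 = 1 + 'X * qnat m.
Proof.
rewrite /qnat big_ord_recl expr0 mulr_sumr.
by congr (_ + _); apply: eq_bigr => i _; rewrite exprS.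
Qed.

Lemma qnatSr m : qnat m.+1 = qnat m + 'X^m.
Proof. exact: big_ord_recr. Qed.

Lemma alg_qnat (A : algType {poly int}) m :
  (qnat m)%:A = \sum_(j < m) ('X%:A : A) ^+ j.
Proof. by rewrite scaler_suml; apply: eq_bigr => j _; rewrite exprZn expr1n. Qed.

Lemma braid_mulB (R : pzRingType) (r s q : R) :
  r * s * r = s * r * s -> GRing.comm q r -> GRing.comm q s ->
  r * s * (r - q) = (s - q) * (r * s).
Proof.
move=> rsr qr qs; rewrite mulrBr mulrBl rsr !mulrA; congr (_ - _).
by rewrite -[LHS]mulrA -qs [LHS]mulrA -qr.
Qed.

Section HeckeTau.

Variables (A : algType {poly int}) (T : nat -> A).

Local Notation tau n := (hecke_tau n T).

Definition tau_falling (n m : nat) : A := \prod_(i < m) tau (n - i).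

Local Notation Y := tau_falling.

Lemma tau_le1 n : (n <= 1)%N -> tau n = 1.
Proof. by move=> n_le1; rewrite /hecke_tau big_geq // add0r. Qed.

Lemma tauS k : (0 < k)%N -> tau k.+1 = 1 + tau k * T k.
Proof.
move=> k_gt0; rewrite /hecke_tau big_nat_recr //= big_nat1.
rewrite mulrDl mul1r mulr_suml [LHS]addrC; congr (1 + (_ + _)).
by apply: eq_big_nat => i /andP[_ lt_ik]; rewrite big_nat_recr //= ltnW.
Qed.

Lemma tau_fallingS n m : Y n m.+1 = tau n * Y n.-1 m.
Proof.
rewrite /tau_falling big_ord_recl subn0; congr (_ * _).
by apply: eq_bigr => i _; rewrite subnS -subn1 subnAC subn1.
Qed.

Lemma tau_fallingSr n m : Y n m.+1 = Y n m * tau (n - m).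
Proof. exact: big_ord_recr. Qed.

Variable N : nat.
Hypothesis Tquad : forall i, (1 <= i <= N.-1)%N -> (T i + 1) * (T i - 'X%:A) = 0.
Hypothesis Tbraid : forall i, (1 <= i <= N - 2)%N ->
  T i * T i.+1 * T i = T i.+1 * T i * T i.+1.
Hypothesis Tcomm : forall i j, (1 <= i <= N.-1)%N -> (1 <= j <= N.-1)%N ->
  (i + 1 < j)%N -> T i * T j = T j * T i.

Lemma comm_T_tau j k : (k < j <= N.-1)%N -> GRing.comm (T j) (tau k).
Proof.
move=> /andP[lt_kj le_jN]; apply: commrD; last exact: commr1.
rewrite big_nat_cond; apply: commr_sum => i /andP[/andP[i_gt0 _] _].
rewrite big_nat_cond; apply: commr_prod => l /andP[/andP[le_il lt_lk] _].
by apply/commr_sym/Tcomm; lia.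
Qed.

Lemma comm_T_tau_falling j n m : (n < j <= N.-1)%N -> GRing.comm (T j) (Y n m).
Proof. by move=> hj; apply: commr_prod => i _; apply: comm_T_tau; lia. Qed.

Lemma tau_tau_mulTBq k : (k.+2 <= N)%N ->
  tau k.+2 * tau k.+1 * (T k.+1 - 'X%:A) = 0.
Proof.
elim: k => [|k IHk] hk.
  by rewrite tauS // !tau_le1 // !mul1r mulr1 addrC; apply: Tquad; lia.
set r := T k.+2; set s := T k.+1 in IHk *; set u := tau k.+2 in IHk *.
have u_def : u = 1 + tau k.+1 * s by rewrite /u tauS.
have rsr : r * s * (r - 'X%:A) = (s - 'X%:A) * (r * s).
  by apply: braid_mulB; [rewrite /r /s Tbraid //; lia | exact: comm_alg ..].
(* braiding turns r s (r - q) into (s - q) r s, exposing the induction hypothesis *)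
have cross : u * r * (tau k.+1 * s) * (r - 'X%:A) = 0.
  have rt : r * tau k.+1 = tau k.+1 * r by apply: comm_T_tau; lia.
  rewrite !mulrA -(mulrA u r) rt -!mulrA [r * (s * _)]mulrA rsr !mulrA.
  by rewrite IHk ?mul0r //; lia.
rewrite tauS // -/u -/r mulrDl mul1r mulrDl {3}u_def [u * r * _]mulrDr mulr1.
rewrite mulrDl cross addr0 -mulrA -{1}[r - _]mul1r -mulrDr -mulrDl [1 + r]addrC.
by rewrite Tquad ?mulr0 //; lia.
Qed.

Lemma tau_falling_mulT n m : (n.+2 <= N)%N ->
  Y n.+2 m.+2 * T n.+1 = 'X *: Y n.+2 m.+2.
Proof.
move=> hn; have /eqP := tau_tau_mulTBq hn.
rewrite mulrBr subr_eq0 mulr_algr => /eqP ttT.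
have YT : Y n m * T n.+1 = T n.+1 * Y n m.
  by symmetry; apply: comm_T_tau_falling; lia.
by rewrite !tau_fallingS /= !mulrA -(mulrA _ (Y n m)) YT mulrA ttT -!scalerAl.
Qed.

Lemma tau_falling_mul_tau n m : (m < n <= N)%N ->
  Y n m * tau n = qnat m *: Y n m + 'X^m *: Y n m.+1.
Proof.
elim: m n => [|m IHm] n hmn.
  by rewrite /tau_falling big_ord1 !big_ord0 subn0 qnat0 scale0r add0r scale1r mul1r.
case: n hmn => [|[|n]] // hmn.
have IH : Y n.+2 m.+1 * tau n.+1 = qnat m *: Y n.+2 m.+1 + 'X^m *: Y n.+2 m.+2.
  by rewrite !(tau_fallingS n.+2) /= -mulrA IHm ?mulrDr -?scalerAr //; lia.
have qT : qnat m *: (Y n.+2 m.+1 * T n.+1) = ('X * qnat m) *: Y n.+2 m.+1.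
  case: m {IHm IH} hmn => [|m] hmn; first by rewrite qnat0 mulr0 !scale0r.
  by rewrite tau_falling_mulT ?scalerA ?(mulrC 'X) //; lia.
rewrite tauS // mulrDr mulr1 mulrA IH mulrDl -!scalerAl tau_falling_mulT; last lia.
by rewrite qT scalerA -exprSr qnatS scalerDl scale1r addrA.
Qed.

Lemma prod_tau_sub_qnat n m : (m <= n <= N)%N ->
  \prod_(k < m) (tau n - (qnat k)%:A) = 'X^('C(m, 2)) *: Y n m.
Proof.
elim: m => [|m IHm] hmn; first by rewrite /tau_falling !big_ord0 expr0 scale1r.
rewrite big_ord_recr /= IHm; last lia.
rewrite -scalerAl mulrBr tau_falling_mul_tau; last lia.
by rewrite mulr_algr addrAC subrr add0r scalerA -exprD binS bin1.
Qed.

Lemma tau_falling_mul_tau_sub_qnat : (0 < N)%N ->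
  Y N N.-1 * (tau N - (qnat N)%:A) = 0.
Proof.
move=> N_gt0.
have YN : Y N N = Y N N.-1.
  have := tau_fallingSr N N.-1; rewrite prednK // => ->.
  by rewrite tau_le1 ?mulr1 //; lia.
rewrite mulrBr tau_falling_mul_tau; last lia.
by rewrite prednK // YN mulr_algr -scalerDl -qnatSr prednK // subrr.
Qed.

End HeckeTau.

Theorem proposition2 (n : nat) (A : algType {poly int}) (T : nat -> A) :
  (2 <= n)%N -> hecke_rel n T ->
  hecke_tau n T *
    \prod_(1 <= k < n.+1 | k != n.-1)
       (hecke_tau n T - \sum_(j < k) ('X%:A : A) ^+ j) = 0.
Proof.
case: n => [|[|n]] // _ [Tquad Tbraid Tcomm].
under eq_bigr => k _ do rewrite -alg_qnat.
rewrite big_mkcond big_nat_recr //= big_nat_recr //= eqxx gtn_eqF //= mulr1.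
rewrite (@eq_big_nat _ _ _ 1 n.+1 _ (fun k => hecke_tau n.+2 T - (qnat k)%:A));
  last by move=> k /andP[_ lt_kn]; rewrite ltn_eqF.
have tau_sub_qnat0 : hecke_tau n.+2 T = hecke_tau n.+2 T - (qnat 0)%:A.
  by rewrite qnat0 scale0r subr0.
rewrite {1}tau_sub_qnat0 mulrA -big_ltn // big_mkord.
rewrite (prod_tau_sub_qnat Tquad Tbraid Tcomm); last lia.
by rewrite -scalerAl (tau_falling_mul_tau_sub_qnat Tquad Tbraid Tcomm) // scaler0.
Qed.
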